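(* Let $(C,\leq)$ be a poset. Then $(C,\leq)$ is a $\downarrow$-poset if and only if for all $c,d\in C$ with $c\leq d$ there exists a $\downarrow$-function $f\colon C\to C$ such that $f(d)=c$.
   Context: A semilattice with identity is a set $S$ with a binary operation (written concatenatively) and an element $1\in S$ such that for all $s,t,u\in S$: $ss=s$, $st=ts$, $(st)u=s(tu)$, and $1s=s$. An action of such an $S$ on a set $C$ is a function $C\times S\to C$, $(c,s)\mapsto cs$, such that $c(st)=(cs)t$ and $c1=c$ for all $c\in C$, $s,t\in S$. Given such an action, define $c\leq d$ on $C$ iff there is $s\in S$ with $ds=c$; this is a partial order. A poset is called a $\downarrow$-poset if it is isomorphic to a poset arising in this way from some action of some semilattice with identity on some set. For a poset $(C,\leq)$, a function $f\colon C\to C$ is a $\downarrow$-function if for all $c,d\in C$: (1) $f(c)\leq c$; (2) $c\leq d$ implies $f(c)\leq f(d)$; (3) $c\leq f(d)$ implies $f(c)=c$. *)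

Set Implicit Arguments.

Record is_poset (C : Type) (le : C -> C -> Prop) : Prop := {
  po_refl : forall c, le c c;
  po_antisym : forall c d, le c d -> le d c -> c = d;
  po_trans : forall c d e, le c d -> le d e -> le c e }.

Record is_semilattice_with_identity (S : Type) (op : S -> S -> S) (one : S)
  : Prop := {
  sl_idem : forall s, op s s = s;
  sl_comm : forall s t, op s t = op t s;
  sl_assoc : forall s t u, op (op s t) u = op s (op t u);
  sl_one : forall s, op one s = s }.

Record is_action (S : Type) (op : S -> S -> S) (one : S)
  (C : Type) (act : C -> S -> C) : Prop := {
  act_op : forall c s t, act c (op s t) = act (act c s) t;
  act_one : forall c, act c one = c }.

Definition action_le (S C : Type) (act : C -> S -> C) (c d : C) : Prop :=
  exists s, act d s = c.

Definition order_iso (C D : Type) (le : C -> C -> Prop) (le' : D -> D -> Prop)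
  (f : C -> D) : Prop :=
  (exists g : D -> C, (forall c, g (f c) = c) /\ (forall d, f (g d) = d)) /\
  (forall c d, le c d <-> le' (f c) (f d)).

Definition down_poset (C : Type) (le : C -> C -> Prop) : Prop :=
  exists (S : Type) (op : S -> S -> S) (one : S) (D : Type) (act : D -> S -> D)
         (f : C -> D),
    is_semilattice_with_identity op one /\ is_action op one act /\
    order_iso le (action_le act) f.

Definition down_function (C : Type) (le : C -> C -> Prop) (f : C -> C) : Prop :=
  (forall c, le (f c) c) /\
  (forall c d, le c d -> le (f c) (f d)) /\
  (forall c d, le c (f d) -> f c = c).

From Stdlib Require Import FunctionalExtensionality ProofIrrelevance.
Set Implicit Arguments.

(* Each element s of a semilattice with identity acting on D gives a
   down-function x |-> x s of the induced order (commutativity and idempotence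
   give conditions (2) and (3)), and down-functions transport along order
   isomorphisms.  Conversely, the down-functions of a poset are idempotent and
   pairwise commuting, so under composition they form a semilattice with
   identity acting on C by evaluation; the hypothesis says precisely that the
   order induced by this action is the given one. *)

Section ActionOrder.
Variables (S D : Type) (op : S -> S -> S) (one : S) (act : D -> S -> D).
Hypothesis Hsl : is_semilattice_with_identity op one.
Hypothesis Hact : is_action op one act.

Lemma act_down_function (s : S) :
  down_function (action_le act) (fun x => act x s).
Proof.
  split; [|split].
  - intro c. exists s. reflexivity.
  - intros c d [t <-]. exists t.
    rewrite <- !(act_op Hact), (sl_comm Hsl). reflexivity.
  - intros c d [t <-]. rewrite <- !(act_op Hact).
    rewrite (sl_comm Hsl t s), <- (sl_assoc Hsl), (sl_idem Hsl).
    reflexivity.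
Qed.

End ActionOrder.

Lemma down_function_transport (C D : Type) (le : C -> C -> Prop)
  (le' : D -> D -> Prop) (f : C -> D) (g : D -> C)
  (gf : forall c, g (f c) = c) (fg : forall d, f (g d) = d)
  (f_mono : forall c d, le c d <-> le' (f c) (f d)) (h : D -> D) :
  down_function le' h -> down_function le (fun c => g (h (f c))).
Proof.
  intros [h_le [h_mono h_fix]]. split; [|split].
  - intro c. apply f_mono. rewrite fg. apply h_le.
  - intros c d Hcd. apply f_mono. rewrite !fg. apply h_mono, f_mono, Hcd.
  - intros c d Hcd. apply f_mono in Hcd. rewrite fg in Hcd.
    rewrite (h_fix _ _ Hcd). apply gf.
Qed.

Section DownFunctions.
Variables (C : Type) (le : C -> C -> Prop).
Hypothesis HC : is_poset le.

Lemma down_function_id : down_function le (fun x => x).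
Proof. split; [|split]; intros; [apply (po_refl HC) | assumption | reflexivity]. Qed.

Lemma down_function_comp (f g : C -> C) :
  down_function le f -> down_function le g -> down_function le (fun x => g (f x)).
Proof.
  intros [f_le [f_mono f_fix]] [g_le [g_mono g_fix]]. split; [|split].
  - intro c. apply (po_trans HC) with (f c); [apply g_le | apply f_le].
  - intros c d Hcd. apply g_mono, f_mono, Hcd.
  - intros c d Hcd.
    assert (f_c : f c = c).
    { apply (f_fix c d). apply (po_trans HC) with (g (f d)); [exact Hcd | apply g_le]. }
    rewrite f_c. exact (g_fix c (f d) Hcd).
Qed.

Lemma down_function_idem (f : C -> C) :
  down_function le f -> forall x, f (f x) = f x.
Proof. intros [_ [_ f_fix]] x. apply (f_fix _ x), (po_refl HC). Qed.

Lemma down_function_comm_le (f g : C -> C) :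
  down_function le f -> down_function le g -> forall x, le (g (f x)) (f (g x)).
Proof.
  intros [f_le [f_mono f_fix]] [g_le [g_mono _]] x.
  rewrite <- (f_fix (g (f x)) x (g_le (f x))).
  apply f_mono, g_mono, f_le.
Qed.

Lemma down_function_comm (f g : C -> C) :
  down_function le f -> down_function le g -> forall x, g (f x) = f (g x).
Proof.
  intros Hf Hg x.
  apply (po_antisym HC); apply down_function_comm_le; assumption.
Qed.

Definition down_fun := { f : C -> C | down_function le f }.

Lemma down_fun_ext (a b : down_fun) :
  (forall x, proj1_sig a x = proj1_sig b x) -> a = b.
Proof.
  destruct a as [f Hf], b as [g Hg]; simpl; intro Efg.
  apply functional_extensionality in Efg. subst g.
  f_equal. apply proof_irrelevance.
Qed.

Definition down_fun_comp (a b : down_fun) : down_fun :=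
  exist _ (fun x => proj1_sig b (proj1_sig a x))
    (down_function_comp (proj2_sig a) (proj2_sig b)).

Definition down_fun_id : down_fun := exist _ (fun x => x) down_function_id.

Definition down_fun_act (c : C) (a : down_fun) : C := proj1_sig a c.

Lemma down_fun_semilattice : is_semilattice_with_identity down_fun_comp down_fun_id.
Proof.
  split; intros; apply down_fun_ext; intro x; simpl.
  - apply down_function_idem, proj2_sig.
  - symmetry; apply down_function_comm; apply proj2_sig.
  - reflexivity.
  - reflexivity.
Qed.

Lemma down_fun_action : is_action down_fun_comp down_fun_id down_fun_act.
Proof. split; reflexivity. Qed.

Lemma action_le_down_fun_act :
  (forall c d, le c d -> exists f, down_function le f /\ f d = c) ->
  forall c d, le c d <-> action_le down_fun_act c d.
Proof.
  intros enough_df c d; split.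
  - intro Hcd. destruct (enough_df c d Hcd) as [f [Hf fd]].
    exists (exist _ f Hf). exact fd.
  - intros [[f Hf] <-]. apply Hf.
Qed.

End DownFunctions.

Theorem theorem1 (C : Type) (le : C -> C -> Prop) (HC : is_poset le) :
  down_poset le <->
  (forall c d : C, le c d -> exists f : C -> C, down_function le f /\ f d = c).
Proof.
  split.
  - intros (S & op & one & D & act & f & Hsl & Hact & [[g [gf fg]] f_mono]) c d Hcd.
    destruct (proj1 (f_mono c d) Hcd) as [s Hs].
    exists (fun x => g (act (f x) s)). split.
    + exact (down_function_transport le f g gf fg f_mono (act_down_function Hsl Hact s)).
    + rewrite Hs. apply gf.
  - intro enough_df.
    exists (down_fun le), (@down_fun_comp C le HC), (down_fun_id HC),
      C, (@down_fun_act C le), (fun x => x).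
    split; [apply down_fun_semilattice | split; [apply down_fun_action |]].
    split.
    + exists (fun x => x); split; reflexivity.
    + exact (action_le_down_fun_act enough_df).
Qed.
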